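(* Let $n_1,\dots,n_k$ be nonnegative integers. Then $\mathcal{L}^{(t)}_H\big(\prod_{i=1}^k H^{(t)}_{n_i}(x)\big)$ equals the number of inhomogeneous coverings of $[n_1]\sqcup\dots\sqcup[n_k]$ by $t$-paths, i.e. the number of ways to partition the set $[n_1]\sqcup\dots\sqcup[n_k]$ into blocks of size $t+1$, none contained in a single $[n_i]$, and to choose for each block one of the $(t+1)!/2$ (undirected) Hamiltonian paths on that block.
   Context: Fix an integer $t\ge1$. A $t$-path in $K_n$ is a subgraph isomorphic to a path with $t$ edges. $H^{(t)}_n(x)=\sum_F(-1)^{|F|}x^{\,n-(t+1)|F|}$ over all families $F$ of pairwise vertex-disjoint $t$-paths in $K_n$ ($H^{(t)}_0=1$). Let $\mu^{(t)}_n$ be the number of coverings of all vertices of $K_n$ by pairwise vertex-disjoint $t$-paths ($\mu^{(t)}_0=1$; $\mu^{(t)}_n=0$ if $t+1\nmid n$), and let $\mathcal{L}^{(t)}_H$ be the linear functional with $\mathcal{L}^{(t)}_H(x^n)=\mu^{(t)}_n$. *)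

From HB Require Import structures.
From mathcomp Require Import all_boot all_order all_algebra.
Set Implicit Arguments. Unset Strict Implicit. Unset Printing Implicit Defensive.
Import GRing.Theory.
Local Open Scope ring_scope.

Section TPaths.
Variable T : finType.

(* A subgraph of the complete graph on vertex type T: (vertex set, edge set),
   edges being 2-element vertex sets. *)
Definition subgraph := ({set T} * {set {set T}})%type.

Definition is_tpath (t : nat) (P : subgraph) : bool :=
  [exists v : (t.+1).-tuple T,
     [&& uniq v,
         P.1 == [set tnth v i | i : 'I_t.+1] &
         P.2 == [set [set tnth v (widen_ord (leqnSn t) i); tnth v (lift ord0 i)]
                   | i : 'I_t]]].

Definition disj_tpath_family (t : nat) (F : {set subgraph}) : bool :=
  [forall P in F, is_tpath t P] &&
  [forall P in F, forall Q in F, (P != Q) ==> [disjoint P.1 & Q.1]].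

Definition tpath_covering (t : nat) (F : {set subgraph}) : bool :=
  disj_tpath_family t F && (\bigcup_(P in F) P.1 == [set: T]).

End TPaths.

Definition Hpoly (t n : nat) : {poly int} :=
  \sum_(F : {set subgraph 'I_n} | disj_tpath_family t F)
     ((-1) ^+ #|F|) *: 'X^(n - t.+1 * #|F|).

Definition mu (t n : nat) : nat :=
  #|[pred F : {set subgraph 'I_n} | tpath_covering t F]|.

Definition LH (t : nat) (p : {poly int}) : int :=
  \sum_(i < size p) p`_i * (mu t i)%:Z.

Definition dunion (ns : seq nat) : finType :=
  {i : 'I_(size ns) & 'I_(nth 0%N ns i)}.

Definition block (ns : seq nat) (i : 'I_(size ns)) : {set dunion ns} :=
  [set v : dunion ns | tag v == i].

Definition inhom_count (t : nat) (ns : seq nat) : nat :=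
  #|[pred F : {set subgraph (dunion ns)} |
      tpath_covering t F &&
      [forall P in F, ~~ [exists i, P.1 \subset block i]]]|.

From mathcomp Require Import all_boot all_algebra.
From mathcomp Require Import zify.
Set Implicit Arguments. Unset Strict Implicit. Unset Printing Implicit Defensive.
Import GRing.Theory.
Local Open Scope ring_scope.

(* For a finite vertex type T, a predicate [ok] on subgraphs and a vertex set
   B we consider the polynomial
     tpath_poly ok B = Σ_F (-1)^|F| X^(|B| - (t+1)|F|),
   the sum ranging over the families F of vertex-disjoint t-paths all of whose
   members satisfy [ok].  The proof has four steps.
   1. Relabelling along an injection: H_{|B|} = tpath_poly (inside B) B, and
      mu_{|B|} counts the coverings of B by disjoint t-paths.
   2. Multiplicativity: for disjoint blocks, the product of the polynomials
      is the polynomial of the union, with "inside some block" as predicate,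
      since such a family splits uniquely into one family per block.
   3. L_H sends the monomial of a family F on the whole of T to the number of
      coverings of T containing F.
   4. Inclusion-exclusion: exchanging the two sums, every covering C
      contributes Σ_{F ⊆ C, F homogeneous} (-1)^|F|, which is 1 if C has no
      homogeneous path and 0 otherwise. *)

Section TPathFamilies.
Variables (T : finType) (t : nat).
Implicit Types (P : subgraph T) (F : {set subgraph T}) (B : {set T}).

Definition path_of (v : (t.+1).-tuple T) : subgraph T :=
  ([set tnth v i | i : 'I_t.+1],
   [set [set tnth v (widen_ord (leqnSn t) i); tnth v (lift ord0 i)]
     | i : 'I_t]).

Lemma is_tpathP P :
  reflect (exists2 v : (t.+1).-tuple T, uniq v & P = path_of v) (is_tpath t P).
Proof.
apply: (iffP existsP) => [[v /and3P[uv /eqP e1 /eqP e2]]|[v uv ->]].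
  by exists v => //; case: P e1 e2 => A E /= -> ->.
by exists v; rewrite uv !eqxx.
Qed.

Lemma tpath_card P : is_tpath t P -> #|P.1| = t.+1.
Proof.
case/is_tpathP => v uv ->.
by rewrite card_imset ?card_ord //; apply/tuple_uniqP.
Qed.

Lemma tpath_neq0 P : is_tpath t P -> P.1 != set0.
Proof. by move=> tP; rewrite -card_gt0 tpath_card. Qed.

Definition verts F : {set T} := \bigcup_(P in F) P.1.

Lemma verts_sub P F : P \in F -> P.1 \subset verts F.
Proof. exact: bigcup_sup. Qed.

Lemma disj_tpath_familyP F :
  reflect ({in F, forall P, is_tpath t P} /\
           {in F &, forall P Q, P != Q -> [disjoint P.1 & Q.1]})
          (disj_tpath_family t F).
Proof.
apply: (iffP andP) => [[/forall_inP tF /forall_inP dF]|[tF dF]].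
  by split=> // P Q PF QF; move/forall_inP/(_ Q QF)/implyP: (dF P PF).
split; apply/forall_inP => // P PF.
by apply/forall_inP => Q QF; apply/implyP; apply: dF.
Qed.

Lemma disj_tpath_family_sub F1 F2 :
  F1 \subset F2 -> disj_tpath_family t F2 -> disj_tpath_family t F1.
Proof.
move/subsetP=> sF12 /disj_tpath_familyP[tF dF]; apply/disj_tpath_familyP.
by split=> [P /sF12 /tF|P Q /sF12 PF /sF12 QF] //; apply: dF.
Qed.

Lemma disj_tpath_familyU F1 F2 :
  disj_tpath_family t F1 -> disj_tpath_family t F2 ->
  [disjoint verts F1 & verts F2] -> disj_tpath_family t (F1 :|: F2).
Proof.
move=> /disj_tpath_familyP[t1 d1] /disj_tpath_familyP[t2 d2] d12.
have cross P Q : P \in F1 -> Q \in F2 -> [disjoint P.1 & Q.1].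
  by move=> PF QF; apply: disjointW (verts_sub PF) (verts_sub QF) d12.
apply/disj_tpath_familyP; split=> [P /setUP[/t1|/t2] //|P Q].
case/setUP=> PF /setUP[] QF neq.
- exact: d1.
- exact: cross.
- by rewrite disjoint_sym; apply: cross.
- exact: d2.
Qed.

Lemma disjoint_tpath_families F1 F2 : disj_tpath_family t F2 ->
  [disjoint verts F1 & verts F2] -> [disjoint F1 & F2].
Proof.
move=> /disj_tpath_familyP[tF2 _] d12; apply/pred0P => P /=.
apply/negbTE/andP => -[PF1 PF2]; case/negP: (tpath_neq0 (tF2 P PF2)).
have := disjointW (verts_sub PF1) (verts_sub PF2) d12.
by rewrite -setI_eq0 setIid.
Qed.

Lemma card_verts F : disj_tpath_family t F -> #|verts F| = (t.+1 * #|F|)%N.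
Proof.
case/disj_tpath_familyP => tF dF.
have fst_inj : {in F &, injective (fun P : subgraph T => P.1)}.
  move=> P Q PF QF ePQ; apply/eqP; apply: contraT => /(dF P Q PF QF).
  by rewrite ePQ -setI_eq0 setIid (negbTE (tpath_neq0 (tF Q QF))).
have vertsE : verts F = cover [set P.1 | P in F] by rewrite cover_imset.
have : trivIset [set P.1 | P in F].
  apply/trivIsetP => _ _ /imsetP[P PF ->] /imsetP[Q QF ->] neq.
  by apply: dF => //; apply: contraNneq neq => ->.
move/eqP; rewrite -vertsE => <-; rewrite big_imset; last exact: fst_inj.
rewrite (eq_bigr (fun=> t.+1)) => [|P /tF/tpath_card //].
by rewrite sum_nat_const mulnC.
Qed.

Definition ok_family (ok : pred (subgraph T)) F :=
  disj_tpath_family t F && [forall P in F, ok P].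

Lemma verts_ok_family (ok : pred (subgraph T)) B F :
  (forall P, ok P -> P.1 \subset B) -> ok_family ok F -> verts F \subset B.
Proof.
by move=> okB /andP[_ /forall_inP okF]; apply/bigcupsP => P /okF/okB.
Qed.

Definition tpath_poly (ok : pred (subgraph T)) B : {poly int} :=
  \sum_(F | ok_family ok F) (-1) ^+ #|F| *: 'X^(#|B| - t.+1 * #|F|).

Lemma eq_tpath_poly (ok ok' : pred (subgraph T)) B :
  ok =1 ok' -> tpath_poly ok B = tpath_poly ok' B.
Proof.
move=> eok; apply: eq_bigl => F; congr (_ && _).
by apply: eq_forallb_in => P _; rewrite eok.
Qed.

(* The empty product: only the empty family lives on the empty set. *)
Lemma tpath_poly_pred0 : tpath_poly (fun _ => false) set0 = 1.
Proof.
rewrite /tpath_poly (big_pred1 set0) ?cards0 ?scale1r ?sub0n // => F.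
apply/andP/eqP => [[_ /forall_inP noP]|->].
  by apply/setP => P; rewrite inE; apply/negbTE/negP => /noP.
split; last by apply/forall_inP => P; rewrite inE.
by apply/disj_tpath_familyP; split=> P; rewrite inE.
Qed.

Section Product.
Variables (ok1 ok2 : pred (subgraph T)) (B1 B2 : {set T}).
Hypotheses (disjB : [disjoint B1 & B2])
  (ok1B : forall P, ok1 P -> P.1 \subset B1)
  (ok2B : forall P, ok2 P -> P.1 \subset B2).

Local Notation ok12 := (fun P => ok1 P || ok2 P).

Lemma not_ok1 F : ok_family ok2 F -> {in F, forall P, ~~ ok1 P}.
Proof.
move=> okF P PF; apply/negP => /ok1B sPB1.
have sPB2 := subset_trans (verts_sub PF) (verts_ok_family ok2B okF).
case/andP: okF => /disj_tpath_familyP[tF _] _.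
case/negP: (tpath_neq0 (tF P PF)).
by rewrite -subset0 -(disjoint_setI0 disjB) subsetI sPB1.
Qed.

Lemma disjoint_verts_ok F1 F2 : ok_family ok1 F1 -> ok_family ok2 F2 ->
  [disjoint verts F1 & verts F2].
Proof.
move=> okF1 okF2; apply: disjointW disjB.
  exact: verts_ok_family ok1B okF1.
exact: verts_ok_family ok2B okF2.
Qed.

Lemma ok_familyU F1 F2 :
  ok_family ok1 F1 -> ok_family ok2 F2 -> ok_family ok12 (F1 :|: F2).
Proof.
move=> okF1 okF2; apply/andP; split.
  apply: disj_tpath_familyU (disjoint_verts_ok okF1 okF2).
    by case/andP: okF1.
  by case/andP: okF2.
case/andP: okF1 okF2 => _ /forall_inP ok1F /andP[_ /forall_inP ok2F].
by apply/forall_inP => P /setUP[/ok1F -> | /ok2F ->]; rewrite ?orbT.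
Qed.

Definition split_family F : {set subgraph T} * {set subgraph T} :=
  ([set P in F | ok1 P], [set P in F | ~~ ok1 P]).

Lemma split_familyK F : (split_family F).1 :|: (split_family F).2 = F.
Proof. by apply/setP => P; rewrite !inE; case: (P \in F); case: (ok1 P). Qed.

Lemma ok_family_split F : ok_family ok12 F ->
  ok_family ok1 (split_family F).1 /\ ok_family ok2 (split_family F).2.
Proof.
case/andP=> fF /forall_inP okF.
have subF (Q : pred (subgraph T)) : [set P in F | Q P] \subset F.
  by apply/subsetP => P; rewrite inE => /andP[].
rewrite /ok_family !(disj_tpath_family_sub (subF _) fF) /=.
split; apply/forall_inP => P; rewrite inE => /andP[// PF].
by move: (okF P PF) => /orP[->|].
Qed.

Lemma split_familyU F1 F2 : ok_family ok1 F1 -> ok_family ok2 F2 ->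
  split_family (F1 :|: F2) = (F1, F2).
Proof.
move=> okF1 okF2; have n1 := not_ok1 okF2.
case/andP: okF1 => _ /forall_inP ok1F.
congr (_, _); apply/setP => P; rewrite !inE.
  case: (boolP (P \in F1)) => [/ok1F -> // | PF1] /=.
  by case: (boolP (P \in F2)) => // /n1 /negbTE.
case: (boolP (P \in F2)) => [/n1 -> | PF2]; rewrite ?orbT ?orbF //.
by case: (boolP (P \in F1)) => // /ok1F ->.
Qed.

(* The signs multiply: the two families share no path. *)
Lemma card_ok_familyU F1 F2 : ok_family ok1 F1 -> ok_family ok2 F2 ->
  #|F1 :|: F2| = (#|F1| + #|F2|)%N.
Proof.
move=> okF1 okF2; rewrite cardsU (disjoint_setI0 _) ?cards0 ?subn0 //.
apply: disjoint_tpath_families (disjoint_verts_ok okF1 okF2).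
by case/andP: okF2.
Qed.

Lemma exponent_union F1 F2 : ok_family ok1 F1 -> ok_family ok2 F2 ->
  ((#|B1| - t.+1 * #|F1|) + (#|B2| - t.+1 * #|F2|) =
   #|B1 :|: B2| - t.+1 * #|F1 :|: F2|)%N.
Proof.
move=> okF1 okF2; have /andP[fF1 _] := okF1; have /andP[fF2 _] := okF2.
have le1 := subset_leq_card (verts_ok_family ok1B okF1).
have le2 := subset_leq_card (verts_ok_family ok2B okF2).
rewrite card_verts // in le1; rewrite card_verts // in le2.
rewrite card_ok_familyU // cardsU (disjoint_setI0 disjB) cards0 subn0.
lia.
Qed.

(* Multiplicativity: expand the product and regroup the pairs of families
   by their union. *)
Lemma tpath_poly_mul :
  tpath_poly ok1 B1 * tpath_poly ok2 B2 = tpath_poly ok12 (B1 :|: B2).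
Proof.
rewrite /tpath_poly big_distrlr pair_big_dep /=.
rewrite (reindex_onto (fun p => p.1 :|: p.2) split_family) /=;
  last by move=> F _; apply: split_familyK.
apply: eq_big => [[F1 F2]|[F1 F2] /andP[okF1 okF2]] /=.
  apply/andP/andP => [[okF1 okF2]|[okU /eqP eU]].
    by split; [apply: ok_familyU | rewrite split_familyU].
  by have := ok_family_split okU; rewrite eU.
by rewrite -scalerAl -scalerAr scalerA -!exprD exponent_union ?card_ok_familyU.
Qed.

End Product.

Lemma tpath_poly_prod (I : finType) (r : seq I) (A : I -> {set T}) : uniq r ->
  {in r &, forall i j, i != j -> [disjoint A i & A j]} ->
  \prod_(i <- r) tpath_poly (fun P => P.1 \subset A i) (A i) =
  tpath_poly (fun P => has (fun i => P.1 \subset A i) r) (\bigcup_(i <- r) A i).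
Proof.
elim: r => [|i r IH]; first by rewrite !big_nil tpath_poly_pred0.
case/andP=> ir ur dA; rewrite !big_cons IH //; last first.
  by move=> j k jr kr; apply: dA; rewrite inE ?jr ?kr orbT.
rewrite tpath_poly_mul // => [|P /hasP[j jr sPj]].
  rewrite bigcup_seq; apply/bigcup_disjointP => j jr.
  by apply: dA; rewrite ?mem_head ?inE ?jr ?orbT //; apply: contraNneq ir => ->.
by apply: subset_trans sPj _; rewrite bigcup_seq; apply: bigcup_sup.
Qed.

End TPathFamilies.

Section Relabel.
Variables (T U : finType) (t : nat) (f : T -> U).
Hypothesis f_inj : injective f.

Definition relabel (P : subgraph T) : subgraph U :=
  (f @: P.1, [set f @: e | e : {set T} in P.2]).

Definition relabel_family (F : {set subgraph T}) : {set subgraph U} :=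
  relabel @: F.

Lemma relabel_inj : injective relabel.
Proof.
by move=> [A E] [B D] [/(imset_inj f_inj) -> /(imset_inj (imset_inj f_inj)) ->].
Qed.

Lemma relabel_path_of (v : (t.+1).-tuple T) :
  relabel (path_of v) = path_of (map_tuple f v).
Proof.
rewrite /relabel /path_of /=; congr (_, _); rewrite -imset_comp.
  by apply: eq_imset => i /=; rewrite tnth_map.
by apply: eq_imset => i /=; rewrite imsetU1 imset_set1 !tnth_map.
Qed.

Lemma map_tuple_onto n (w : n.-tuple U) :
  {subset w <= codom f} -> exists v : n.-tuple T, map_tuple f v = w.
Proof.
move/map_preim => fw.
have sz : size (preim_seq f w) == n by rewrite -(size_map f) fw size_tuple.
by exists (Tuple sz); apply: val_inj.
Qed.

Lemma tpath_relabel_onto (P' : subgraph U) :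
  is_tpath t P' -> P'.1 \subset f @: setT ->
  exists2 P, is_tpath t P & relabel P = P'.
Proof.
case/is_tpathP => w uw -> /subsetP wf.
have [v fv] : exists v, map_tuple f v = w.
  apply: map_tuple_onto => _ /tnthP[i ->].
  have /imsetP[x _ ->] : tnth w i \in f @: setT by apply/wf/imsetP; exists i.
  exact: codom_f.
exists (path_of v); last by rewrite relabel_path_of fv.
by apply/is_tpathP; exists v => //; move: uw; rewrite -fv => /map_uniq.
Qed.

Lemma is_tpath_relabel (P : subgraph T) : is_tpath t (relabel P) = is_tpath t P.
Proof.
apply/idP/is_tpathP => [tP|[v uv ->]]; last first.
  apply/is_tpathP; exists (map_tuple f v); last exact: relabel_path_of.
  by rewrite map_inj_uniq.
have [|Q /is_tpathP tQ /relabel_inj <- //] := tpath_relabel_onto tP.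
by apply: imsetS; apply/subsetP.
Qed.

Lemma relabel_family_inj : injective relabel_family.
Proof. exact: imset_inj relabel_inj. Qed.

Lemma card_relabel_family (F : {set subgraph T}) :
  #|relabel_family F| = #|F|.
Proof. exact: card_imset relabel_inj. Qed.

Lemma verts_relabel_family (F : {set subgraph T}) :
  verts (relabel_family F) = f @: verts F.
Proof.
apply/setP => y; apply/bigcupP/imsetP => [[_ /imsetP[P PF ->]]|].
  by case/imsetP => x xP ->; exists x => //; apply/bigcupP; exists P.
case=> x /bigcupP[P PF xP] ->.
by exists (relabel P); [apply: imset_f | apply: imset_f].
Qed.

Lemma disj_tpath_family_relabel (F : {set subgraph T}) :
  disj_tpath_family t (relabel_family F) = disj_tpath_family t F.
Proof.
apply/disj_tpath_familyP/disj_tpath_familyP => [[tF dF]|[tF dF]]; split.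
- by move=> P PF; rewrite -is_tpath_relabel; apply/tF/imset_f.
- move=> P Q PF QF nPQ; rewrite -(imset_disjoint (f := f)) //.
  apply: (dF (relabel P) (relabel Q)); rewrite ?imset_f //.
  by rewrite (inj_eq relabel_inj).
- by move=> _ /imsetP[P PF ->]; rewrite is_tpath_relabel; apply: tF.
- move=> _ _ /imsetP[P PF ->] /imsetP[Q QF ->]; rewrite (inj_eq relabel_inj).
  by move=> nPQ; rewrite /= (imset_disjoint f_inj); apply: dF.
Qed.

Lemma relabel_family_image :
  relabel_family @: [set F | disj_tpath_family t F] =
  [set F' | disj_tpath_family t F' & verts F' \subset f @: setT].
Proof.
apply/setP => F'; rewrite inE; apply/imsetP/andP => [[F]|[fF' sF']].
  rewrite inE => fF ->; rewrite disj_tpath_family_relabel verts_relabel_family.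
  by split=> //; apply: imsetS; apply/subsetP.
have onto P' : P' \in F' -> exists2 P, is_tpath t P & relabel P = P'.
  move=> P'F; case/disj_tpath_familyP: fF' => tF' _.
  exact: tpath_relabel_onto (tF' P' P'F) (subset_trans (verts_sub P'F) sF').
have relabelK : relabel_family (relabel @^-1: F') = F'.
  apply/setP => P'; apply/imsetP/idP => [[P]|P'F].
    by rewrite inE => PF ->.
  by have [P _ eP] := onto P' P'F; exists P; rewrite // inE eP.
exists (relabel @^-1: F'); rewrite // inE.
by rewrite -disj_tpath_family_relabel relabelK.
Qed.

End Relabel.

Section InsideBlock.
Variables (T : finType) (t : nat) (B : {set T}).

Definition enumB (i : 'I_#|B|) : T := enum_val i.

Lemma enumB_inj : injective enumB.
Proof. exact: enum_val_inj. Qed.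

Lemma enumB_image : enumB @: setT = B.
Proof.
apply/eqP; rewrite eqEcard card_imset ?cardsT ?card_ord ?leqnn ?andbT //.
  by apply/subsetP => _ /imsetP[i _ ->]; apply: enum_valP.
exact: enumB_inj.
Qed.

Lemma Hpoly_tpath_poly :
  Hpoly t #|B| = tpath_poly t (fun P => P.1 \subset B) B.
Proof.
rewrite /Hpoly (eq_bigl (mem [set F | disj_tpath_family t F])) => [|F];
  last by rewrite !inE.
under eq_bigr => F _ do rewrite -(card_relabel_family enumB_inj F).
pose term (F : {set subgraph T}) : {poly int} :=
  (-1) ^+ #|F| *: 'X^(#|B| - t.+1 * #|F|).
rewrite -(big_imset term (in2W (relabel_family_inj enumB_inj))) /=.
rewrite (relabel_family_image t enumB_inj) enumB_image.
apply: eq_bigl => F; rewrite inE.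
by congr (_ && _); apply/bigcupsP/forall_inP.
Qed.

Lemma mu_coverings :
  mu t #|B| = #|[set C | disj_tpath_family t C & verts C == B]|.
Proof.
rewrite /mu -(card_imset _ (relabel_family_inj enumB_inj)).
apply: eq_card => C; rewrite inE; apply/imsetP/andP => [[F]|[fC /eqP vC]].
  rewrite inE => /andP[fF /eqP vF] ->.
  rewrite (disj_tpath_family_relabel t enumB_inj) verts_relabel_family.
  by rewrite [verts F]vF enumB_image.
have : C \in relabel_family enumB @: [set F | disj_tpath_family t F].
  by rewrite (relabel_family_image t enumB_inj) inE fC vC enumB_image subxx.
case/imsetP => F; rewrite inE => fF eC; exists F => //; rewrite inE.
apply/andP; split=> //; apply/eqP/(imset_inj enumB_inj).
by rewrite -[LHS]verts_relabel_family -eC vC enumB_image.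
Qed.

End InsideBlock.

Section LinearFunctional.
Variable t : nat.

Lemma LH_widen (p : {poly int}) n : (size p <= n)%N ->
  LH t p = \sum_(i < n) p`_i * (mu t i)%:Z.
Proof.
move=> le_pn; rewrite /LH.
rewrite (big_ord_widen n (fun i => p`_i * (mu t i)%:Z) le_pn) big_mkcond.
apply: eq_bigr => i _; case: ltnP => // le_pi.
by rewrite nth_default // mul0r.
Qed.

Lemma LH0 : LH t 0 = 0.
Proof. by rewrite /LH size_poly0 big_ord0. Qed.

Lemma LHD p q : LH t (p + q) = LH t p + LH t q.
Proof.
pose n := maxn (size p) (size q).
rewrite !(@LH_widen _ n) ?leq_maxl ?leq_maxr ?size_polyD // -big_split /=.
by apply: eq_bigr => i _; rewrite coefD mulrDl.
Qed.

Lemma LH_monomial (c : int) m : LH t (c *: 'X^m) = c * (mu t m)%:Z.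
Proof.
rewrite (@LH_widen _ m.+1); last by rewrite -(size_polyXn int m) size_scale_leq.
rewrite big_ord_recr /= coefZ coefXn eqxx mulr1 big1 ?add0r // => i _.
by rewrite coefZ coefXn (ltn_eqF (ltn_ord i)) mulr0 mul0r.
Qed.

End LinearFunctional.

Lemma sum_sign_subsets (X : finType) (S : {set X}) :
  \sum_(F : {set X} | F \subset S) (-1 : int) ^+ #|F| = (S == set0)%:R.
Proof.
pose c (x : X) : int := if x \in S then -1 else 0.
have expand := @bigA_distr _ 0 1 *%R +%R X c (fun=> 1).
have term (F : {set X}) : \prod_i (if i \in F then c i else 1) =
              if F \subset S then (-1) ^+ #|F| else 0.
  rewrite -big_mkcond; case: (boolP (F \subset S)) => [sFS|/subsetPn[x xF xS]].
    rewrite (eq_bigr (fun=> -1)) ?prodr_const // => i iF.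
    by rewrite /c (subsetP sFS i iF).
  by rewrite (bigD1 x) //= /c (negbTE xS) mul0r.
rewrite big_mkcond (eq_bigr _ (fun F _ => esym (term F))) -expand.
case: (set_0Vmem S) => [S0|[x xS]].
  by rewrite S0 eqxx big1 // => i _; rewrite /c S0 in_set0 /= add0r.
have /negbTE -> : S != set0 by apply/set0Pn; exists x.
by rewrite (bigD1 x) //= /c xS addNr mul0r.
Qed.

Section CoveringsContaining.
Variables (T : finType) (t : nat) (F : {set subgraph T}).
Hypothesis fF : disj_tpath_family t F.

Lemma covering_union G : disj_tpath_family t G -> verts G = ~: verts F ->
  tpath_covering t (F :|: G).
Proof.
move=> fG vG; have dFG : [disjoint verts F & verts G].
  by rewrite vG -setI_eq0 setICr.
rewrite /tpath_covering disj_tpath_familyU //=.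
by rewrite bigcup_setU -/(verts F) -/(verts G) vG setUCr.
Qed.

Lemma covering_diff C : tpath_covering t C -> F \subset C ->
  disj_tpath_family t (C :\: F) && (verts (C :\: F) == ~: verts F).
Proof.
case/andP => fC /eqP vC sFC; case/disj_tpath_familyP: (fC) => _ dC.
rewrite (disj_tpath_family_sub (subsetDl C F) fC); apply/eqP/setP => x.
rewrite inE; apply/bigcupP/idP => [[P /setDP[PC PF] xP]|xF].
  apply/bigcupP => -[Q QF xQ].
  have nPQ : P != Q by apply: contraNneq PF => ->.
  have := dC P Q PC (subsetP sFC Q QF) nPQ.
  by move/pred0P/(_ x); rewrite /= xP xQ.
have : x \in verts C by rewrite [verts C]vC inE.
case/bigcupP => P PC xP; exists P => //; rewrite inE PC andbT.
by apply: contraNN xF => PF; apply/bigcupP; exists P.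
Qed.

Lemma card_coverings_containing :
  #|[set G | disj_tpath_family t G & verts G == ~: verts F]| =
  #|[set C | tpath_covering t C & F \subset C]|.
Proof.
have unionK G : disj_tpath_family t G -> verts G = ~: verts F ->
    (F :|: G) :\: F = G.
  move=> fG vG; rewrite setDUl setDv set0U; apply/setDidPl.
  by apply: disjoint_tpath_families fF _; rewrite vG -setI_eq0 setIC setICr.
rewrite -(@card_in_imset _ _ (fun G => F :|: G)) => [|G1 G2]; last first.
  rewrite !inE => /andP[fG1 /eqP vG1] /andP[fG2 /eqP vG2] eG.
  by rewrite -(unionK G1) // eG unionK.
congr #|pred_of_set _|; apply/setP => C; rewrite inE.
apply/imsetP/andP => [[G]|[cC sFC]].
  by rewrite inE => /andP[fG /eqP vG] ->; rewrite covering_union // subsetUl.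
exists (C :\: F); first by rewrite inE covering_diff.
by rewrite -{1}(setID C F) (setIidPr sFC).
Qed.

End CoveringsContaining.

Section InclusionExclusion.
Variables (T : finType) (t : nat).

Lemma LH_family_term (F : {set subgraph T}) : disj_tpath_family t F ->
  LH t ((-1) ^+ #|F| *: 'X^(#|[set: T]| - t.+1 * #|F|)) =
  (-1) ^+ #|F| * #|[set C | tpath_covering t C & F \subset C]|%:Z.
Proof.
move=> fF; rewrite LH_monomial -card_coverings_containing // -mu_coverings.
by rewrite cardsT -(card_verts fF) -(cardsC (verts F)) addKn.
Qed.

Lemma hom_part_eq0 (hom : pred (subgraph T)) (C : {set subgraph T}) :
  ([set P in C | hom P] == set0) = [forall P in C, ~~ hom P].
Proof.
apply/eqP/forall_inP => [homC P PC|noHom]; last first.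
  by apply/setP => P; rewrite !inE; apply/andP => -[/noHom /negP].
by apply/negP => hP; have := in_set0 P; rewrite -homC inE PC hP.
Qed.

Lemma hom_subfamilies (hom : pred (subgraph T)) C F :
  disj_tpath_family t C ->
  (ok_family t hom F && (F \subset C)) = (F \subset [set P in C | hom P]).
Proof.
move=> fC; apply/andP/subsetP => [[/andP[_ /forall_inP homF] /subsetP sFC]|sFH].
  by move=> P PF; rewrite inE sFC ?homF.
have sFC : F \subset C by apply/subsetP => P /sFH; rewrite inE => /andP[].
split=> //; rewrite /ok_family (disj_tpath_family_sub sFC fC).
by apply/forall_inP => P /sFH; rewrite inE => /andP[].
Qed.

Lemma LH_tpath_poly (hom : pred (subgraph T)) :
  LH t (tpath_poly t hom setT) =
  #|[set C | tpath_covering t C & [forall P in C, ~~ hom P]]|%:Z.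
Proof.
rewrite /tpath_poly (big_morph _ (LHD t) (LH0 t)).
under eq_bigr => F /andP[fF _].
  rewrite LH_family_term // -sum1dep_card -natz natr_sum mulr_sumr.
  over.
rewrite (exchange_big_dep (tpath_covering t)) /=; last by move=> F C _ /andP[].
rewrite -sum1dep_card -natz natr_sum [RHS]big_mkcondr; apply: eq_bigr => C cC.
pose homC := [set P in C | hom P].
rewrite (eq_bigl (fun F : {set subgraph T} => F \subset homC)) => [|F];
  last by rewrite cC hom_subfamilies //; case/andP: cC.
under eq_bigr do rewrite mulr1.
by rewrite sum_sign_subsets hom_part_eq0; case: ifP.
Qed.

End InclusionExclusion.

Section Blocks.
Variable ns : seq nat.

Lemma card_block (i : 'I_(size ns)) : #|block i| = nth 0%N ns i.
Proof.
pose T_ (j : 'I_(size ns)) := 'I_(nth 0%N ns j).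
have -> : block i = [set (Tagged T_ x : dunion ns) | x : 'I_(nth 0%N ns i)].
  apply/setP => -[j x]; rewrite !inE /=; apply/eqP/imsetP => [eji|[y _ exy]].
    by move: x; rewrite eji => x; exists x.
  exact: (congr1 tag exy).
by rewrite card_imset ?cardsT ?card_ord //; apply: eq_from_Tagged.
Qed.

Lemma disjoint_blocks (i j : 'I_(size ns)) :
  i != j -> [disjoint block i & block j].
Proof.
move=> nij; rewrite -setI_eq0; apply/eqP/setP => v; rewrite !inE.
by apply/andP => -[/eqP -> /eqP eij]; rewrite eij eqxx in nij.
Qed.

Lemma cover_blocks : \bigcup_(i <- index_enum 'I_(size ns)) block i = setT.
Proof.
by apply/setP => v; rewrite inE; apply/bigcupP; exists (tag v); rewrite ?inE.
Qed.

End Blocks.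

Theorem mainTheorem12 (t : nat) (ns : seq nat) (ht : (0 < t)%N) :
  LH t (\prod_(m <- ns) Hpoly t m) = (inhom_count t ns)%:Z.
Proof.
rewrite (big_nth 0%N) big_mkord.
under eq_bigr => i _ do rewrite -card_block Hpoly_tpath_poly.
rewrite tpath_poly_prod ?index_enum_uniq // => [|i j _ _]; last first.
  exact: disjoint_blocks.
pose hom (P : subgraph (dunion ns)) := [exists i, P.1 \subset block i].
rewrite cover_blocks (eq_tpath_poly _ (ok' := hom)) => [|P]; last first.
  by apply/hasP/existsP => -[i]; exists i; rewrite ?mem_index_enum.
by rewrite LH_tpath_poly; congr Posz; apply: eq_card => C; rewrite inE.
Qed.
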